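(* Let $\nu$ be a class (ii) distribution with associated functions $f,\varphi,\Phi$ and assume one of the following: (i) $\Phi^{-1}$ is pseudo-regularly varying; (ii) $\nu$ is a Weibull distribution with shape $k\in(0,1)$ and scale $\lambda>0$ (with $\Phi(x)=(x/\lambda)^k$); (iii) $\nu$ is a generalized lognormal distribution with $r>1$ (with $\Phi(x)=\frac{1}{r\sigma^r}\log(x)^r$). Let $\theta>1$ and let $\eta$ be a distribution with density $g$ such that $\liminf_{x\to\infty}x^{t+1}g(x)>0$ for some $t\in(1,\theta)$. Then $D_{F_\Phi}(\eta|\nu)=\infty$.
   Context: Densities are written $f=e^{-\varphi}$. For strictly convex $F$ with $F(1)=0$, $D_F(\eta|\nu)=\int_0^\infty F(g/f)f\,dx$ if $\eta\ll\nu$ and $+\infty$ otherwise. Class (ii): $\lim_{x\to\infty}\varphi(x)/x=0$, $\lim_{x\to\infty}\varphi(x)/\log x=\infty$, and there exist $\bar x>0$ and $\Phi:\mathbb R_+\to\mathbb R$ positive, strictly concave, twice differentiable and increasing on $[\bar x,\infty)$ such that, with $\Phi^{-1}$ the inverse of $\Phi|_{[\bar x,\infty)}$, $0<\liminf_{x\to\infty}\Phi^{-1}(\varphi(x))/x\le\limsup_{x\to\infty}\Phi^{-1}(\varphi(x))/x<\infty$. With $\bar y=\exp(\Phi(\bar x))$: $F_\Phi(y)=y\log y$ for $y\le\bar y$ and $F_\Phi(y)=a\,y\,\Phi^{-1}(\log y)^\theta+b$ for $y>\bar y$, where $a=\frac{1+\log\bar y}{\Phi^{-1}(\log\bar y)^\theta+\theta\Phi^{-1}(\log\bar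 y)^{\theta-1}(\Phi^{-1})'(\log\bar y)}$, $b=\bar y\log\bar y-a\bar y\Phi^{-1}(\log\bar y)^\theta$. A measurable $h:\mathbb R_+\to(0,\infty)$ is pseudo-regularly varying if $\limsup_{c\to1}\limsup_{x\to\infty}h(cx)/h(x)=1$. The Weibull density with scale $\lambda>0$, shape $k\in(0,1)$ is $f(x)=\frac{k}{\lambda}(x/\lambda)^{k-1}e^{-(x/\lambda)^k}$ for $x\ge0$. The generalized lognormal density is $f(x)=\frac{1}{Zx}\exp\!\big(-\frac{1}{r\sigma^r}|\log x-\mu|^r\big)$, $x>0$, with $Z=2r^{1/r}\sigma\Gamma(1+1/r)$, $r>1$, $\sigma>0$, $\mu\in\mathbb R$. *)

From Stdlib Require Import Reals Lra.
Open Scope R_scope.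

(** Right derivative of [h] at [x] equals [l] (used for (Phi^{-1})' at the
    left end point log ybar = Phi xbar of the domain of Phi^{-1}). *)
Definition right_deriv (h : R -> R) (x l : R) : Prop :=
  forall eps, 0 < eps -> exists delta, 0 < delta /\
    forall e, 0 < e < delta -> Rabs ((h (x + e) - h x) / e - l) < eps.

Definition is_inverse_on (Phi Phiinv : R -> R) (xbar : R) : Prop :=
  (forall x, xbar <= x -> Phiinv (Phi x) = x) /\
  (forall y, Phi xbar <= y -> xbar <= Phiinv y /\ Phi (Phiinv y) = y).

(** Class (ii), with density f = exp(-phi) and associated xbar, Phi. *)
Definition class_ii (phi Phi Phiinv : R -> R) (xbar : R) : Prop :=
  (forall eps, 0 < eps -> exists X, forall x, X < x -> Rabs (phi x / x) < eps) /\
  (forall M, exists X, 1 < X /\ forall x, X < x -> M < phi x / ln x) /\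
  0 < xbar /\
  (forall x, xbar <= x -> 0 < Phi x) /\
  (forall x y, xbar <= x -> x <= y -> Phi x <= Phi y) /\
  (forall x y l, xbar <= x -> x < y -> 0 < l < 1 ->
     l * Phi x + (1 - l) * Phi y < Phi (l * x + (1 - l) * y)) /\
  (exists dPhi d2Phi : R -> R, forall x, xbar <= x ->
     derivable_pt_lim Phi x (dPhi x) /\ derivable_pt_lim dPhi x (d2Phi x)) /\
  is_inverse_on Phi Phiinv xbar /\
  (exists alpha X, 0 < alpha /\ forall x, X < x -> alpha <= Phiinv (phi x) / x) /\
  (exists beta X, forall x, X < x -> Phiinv (phi x) / x <= beta).

(** The function F_Phi (depends on Phi through xbar, Phi xbar, Phi^{-1} and
    the value dinv = (Phi^{-1})'(log ybar)). *)
Definition ybar (Phi : R -> R) (xbar : R) : R := exp (Phi xbar).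

Definition coef_a (Phi Phiinv : R -> R) (xbar theta dinv : R) : R :=
  let yb := ybar Phi xbar in
  (1 + ln yb) /
  (Rpower (Phiinv (ln yb)) theta
   + theta * Rpower (Phiinv (ln yb)) (theta - 1) * dinv).

Definition coef_b (Phi Phiinv : R -> R) (xbar theta dinv : R) : R :=
  let yb := ybar Phi xbar in
  yb * ln yb - coef_a Phi Phiinv xbar theta dinv * yb * Rpower (Phiinv (ln yb)) theta.

Definition F_Phi (Phi Phiinv : R -> R) (xbar theta dinv : R) (y : R) : R :=
  if Rle_dec y (ybar Phi xbar) then y * ln y
  else coef_a Phi Phiinv xbar theta dinv * y * Rpower (Phiinv (ln y)) theta
       + coef_b Phi Phiinv xbar theta dinv.

(** Pseudo-regular variation:
    limsup_{c -> 1, c <> 1} limsup_{x -> oo} h(cx)/h(x) = 1. *)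
Definition pseudo_regularly_varying (h : R -> R) : Prop :=
  (forall eps, 0 < eps -> exists delta, 0 < delta /\
     forall c, 0 < Rabs (c - 1) < delta ->
       exists X, forall x, X < x -> h (c * x) / h x <= 1 + eps) /\
  (forall eps delta, 0 < eps -> 0 < delta -> exists c, 0 < Rabs (c - 1) < delta /\
     forall X, exists x, X < x /\ 1 - eps <= h (c * x) / h x).

Definition improper_int_0_inf (h : R -> R) (L : R) : Prop :=
  forall eps, 0 < eps -> exists B0, 0 < B0 /\ forall B, B0 <= B ->
    exists pr : Riemann_integrable h 0 B, Rabs (RiemannInt pr - L) < eps.

Definition is_Gamma (z G : R) : Prop :=
  improper_int_0_inf (fun s => Rpower s (z - 1) * exp (- s)) G.

Definition weibull_density (lambda k x : R) : R :=
  k / lambda * Rpower (x / lambda) (k - 1) * exp (- Rpower (x / lambda) k).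

Definition gen_lognormal_density (Z r sigma mu x : R) : R :=
  / (Z * x) * exp (- (/ (r * Rpower sigma r)) * Rpower (Rabs (ln x - mu)) r).

(** "The integral of h over (0,oo) is +oo", in the (strong) sense that h lies
    above step functions on compact subintervals of (0,oo) with arbitrarily
    large integrals (the lower Riemann integral is +oo). *)
Definition integral_diverges (h : R -> R) : Prop :=
  forall M, exists a b, 0 < a < b /\ exists s : StepFun a b,
    (forall x, a <= x <= b -> s x <= h x) /\ M <= RiemannInt_SF s.

Definition divergence_infinite (F f g : R -> R) : Prop :=
  integral_diverges (fun x => F (g x / f x) * f x).

(* Where [g/f] is large, [F_Phi (g/f) f = a g Phiinv (ln (g/f))^theta + b f] with [a > 0].
   Since [g >= c x^-(t+1)] and [phi] dominates [ln x], the log-likelihood ratio [ln (g/f)] is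
   eventually at least [rho phi x] for every [rho < 1].  In each of the cases (i)-(iii),
   [Phiinv (rho y) >= q Phiinv(y)^p] for some [rho < 1] and [p >= t/theta] (with [p = 1] in
   cases (i) and (ii)), while [Phiinv (phi x) >= alpha x] by the class (ii) assumption.  Hence
   [Phiinv (ln (g/f))^theta >= kappa^theta x^t], which exactly compensates the decay of [g]:
   the integrand is at least [K / x] near infinity, and its integral diverges logarithmically. *)

From Stdlib Require Import Reals Lra.
From Coquelicot Require Import Coquelicot.
Open Scope R_scope.

Notation at_top := (Rbar_locally p_infty).

Lemma at_top_gt c : at_top (fun x => c < x).
Proof. now exists c. Qed.

Lemma at_top_comp {f : R -> R} {P : R -> Prop} :
  filterlim f at_top at_top -> at_top P -> at_top (fun x => P (f x)).
Proof. intros Hf HP; exact (Hf P HP). Qed.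

Lemma Rpower_pos x y : 0 < Rpower x y.
Proof. apply exp_pos. Qed.

Lemma StepFun_below_RiemannInt (k h : R -> R) a b (pr : Riemann_integrable k a b) :
  a <= b -> (forall x, a <= x <= b -> k x <= h x) ->
  exists s : StepFun a b, (forall x, a <= x <= b -> s x <= h x) /\
    RiemannInt pr - 2 <= RiemannInt_SF s.
Proof.
  intros Hab Hkh.
  unfold RiemannInt; destruct (RiemannInt_exists pr RinvN RinvN_cv) as [l Hl].
  destruct (Hl 1 Rlt_0_1) as [N HN].
  specialize (HN N (le_n N)); unfold Rdist in HN.
  destruct (phi_sequence_prop RinvN pr N) as [psi [Hpsi Hint]].
  set (sk := phi_sequence RinvN pr N) in *.
  (* [sk - psi] lies below [k], and its integral is within [1 + RinvN N] of that of [k]. *)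
  exists (mkStepFun (StepFun_P28 (-1) sk psi)); split.
  - intros x Hx; simpl.
    assert (Hm : Rmin a b <= x <= Rmax a b) by (rewrite Rmin_left, Rmax_right; lra).
    specialize (Hpsi x Hm); specialize (Hkh x Hx).
    pose proof (Rle_abs (- (k x - sk x))); rewrite Rabs_Ropp in *; lra.
  - rewrite StepFun_P30.
    assert (HN1 : RinvN N <= 1).
    { unfold RinvN; simpl. pose proof (pos_INR N).
      rewrite <- Rinv_1; apply Rinv_le_contravar; lra. }
    apply Rabs_def2 in HN; apply Rabs_def2 in Hint; lra.
Qed.

Lemma RiemannInt_inv K a b (Hab : 0 < a < b)
  (pr : Riemann_integrable (fun x => K / x) a b) :
  RiemannInt pr = K * ln b - K * ln a.
Proof.
  rewrite <- (RInt_Reals _ _ _ pr); apply is_RInt_unique.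
  apply (is_RInt_derive (fun x => K * ln x)); intros x Hx;
    rewrite Rmin_left, Rmax_right in Hx by lra.
  - auto_derive; [lra | field; lra].
  - apply continuity_pt_filterlim, continuity_pt_div;
      [apply continuity_pt_const; now intros u v | apply derivable_continuous_pt, derivable_pt_id | lra].
Qed.

Lemma integral_diverges_of_ge_inv (K : R) (h : R -> R) :
  0 < K -> at_top (fun x => K / x <= h x) -> integral_diverges h.
Proof.
  intros HK [X HX] M.
  set (a := Rmax X 1 + 1).
  assert (Ha : 1 < a /\ X < a) by (unfold a; pose proof (Rmax_l X 1); pose proof (Rmax_r X 1); lra).
  set (b := a * exp ((Rabs M + 2) / K)).
  assert (Hexp : 1 < exp ((Rabs M + 2) / K)).
  { rewrite <- exp_0; apply exp_increasing, Rdiv_lt_0_compat; [pose proof (Rabs_pos M) |]; lra. }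
  assert (Hab : a < b) by (unfold b; nra).
  exists a, b; split; [lra |].
  assert (Hcont : forall x, a <= x <= b -> continuity_pt (fun x => K / x) x).
  { intros x Hx; apply continuity_pt_div;
      [apply continuity_pt_const; now intros u v | apply derivable_continuous_pt, derivable_pt_id | lra]. }
  set (pr := continuity_implies_RiemannInt (Rlt_le _ _ Hab) Hcont).
  destruct (StepFun_below_RiemannInt _ h a b pr) as [s [Hs Hints]]; [lra | intros x Hx; apply HX; lra |].
  exists s; split; [exact Hs |].
  rewrite (RiemannInt_inv K a b ltac:(lra)) in Hints.
  assert (Hlnb : ln b = ln a + (Rabs M + 2) / K)
    by (unfold b; rewrite ln_mult, ln_exp by (try apply exp_pos; lra); reflexivity).
  rewrite Hlnb in Hints.
  replace (K * (ln a + (Rabs M + 2) / K) - K * ln a) with (Rabs M + 2) in Hints by (field; lra).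
  pose proof (Rle_abs M); lra.
Qed.

Lemma ln_gt_at_top B : at_top (fun x => B < ln x).
Proof.
  exists (exp B); intros x Hx.
  rewrite <- (ln_exp B); apply ln_increasing; [apply exp_pos | exact Hx].
Qed.

Section LogRatio.

Variable phi : R -> R.
Hypothesis phi_ln : forall M, exists X, 1 < X /\ forall x, X < x -> M < phi x / ln x.

Lemma phi_gt_mul_ln M : at_top (fun x => M * ln x < phi x).
Proof.
  destruct (phi_ln M) as [X [HX H]]; exists X; intros x Hx.
  assert (Hln : 0 < ln x) by (rewrite <- ln_1; apply ln_increasing; lra).
  specialize (H x Hx); apply (Rmult_lt_compat_r (ln x)) in H; [| exact Hln].
  unfold Rdiv in H; rewrite Rmult_assoc, Rinv_l in H; lra.
Qed.

Lemma phi_tends_to_infinity : filterlim phi at_top at_top.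
Proof.
  intros P [B HB]; unfold filtermap.
  generalize (filter_and _ _ (phi_gt_mul_ln (Rabs B)) (ln_gt_at_top 1)); apply filter_imp.
  intros x [Hphi Hln]; apply HB; pose proof (Rle_abs B); pose proof (Rabs_pos B); nra.
Qed.

(* [g x >= c x^-(t+1)] makes [ln (g/f) >= phi - (t+1) ln x + ln c], and [phi] beats any multiple of [ln x]. *)
Lemma log_ratio_ge (g : R -> R) t c rho :
  0 < c -> 0 < rho < 1 ->
  at_top (fun x => c <= Rpower x (t + 1) * g x) ->
  at_top (fun x => rho * phi x <= ln (g x / exp (- phi x))).
Proof.
  intros Hc Hrho Hg.
  set (M := (t + 1 + Rabs (ln c)) / (1 - rho)).
  generalize (filter_and _ _ Hg (filter_and _ _ (phi_gt_mul_ln M)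
    (filter_and _ _ (ln_gt_at_top 1) (at_top_gt 0)))); apply filter_imp.
  intros x [Hgx [Hphi [Hln Hx]]].
  assert (HP : 0 < Rpower x (t + 1)) by apply Rpower_pos.
  assert (Hgc : c / Rpower x (t + 1) <= g x).
  { apply (Rmult_le_reg_l (Rpower x (t + 1))); [exact HP |]; field_simplify; lra. }
  assert (Hc' : 0 < c / Rpower x (t + 1)) by (apply Rdiv_lt_0_compat; assumption).
  assert (Hlng : ln c - (t + 1) * ln x <= ln (g x)).
  { rewrite <- ln_Rpower, <- ln_div by assumption.
    destruct Hgc as [Hlt | Heq]; [left; apply ln_increasing | right; f_equal]; assumption. }
  rewrite ln_div, ln_exp by (try apply exp_pos; lra).
  assert (HM : M * (1 - rho) = t + 1 + Rabs (ln c)) by (unfold M; field; lra).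
  pose proof (Rle_abs (- ln c)); rewrite Rabs_Ropp in *.
  pose proof (Rabs_pos (ln c)).
  assert ((1 - rho) * (M * ln x) < (1 - rho) * phi x) by (apply Rmult_lt_compat_l; lra).
  nra.
Qed.

End LogRatio.

(* Cases (i)-(iii) of the proposition; only the shape of [Phi] is used, not the density equations. *)
Definition Phi_cases (phi Phi Phiinv : R -> R) : Prop :=
  pseudo_regularly_varying Phiinv
  \/ (exists lambda k, 0 < lambda /\ 0 < k < 1 /\
        (forall x, 0 < x -> exp (- phi x) = weibull_density lambda k x) /\
        (forall x, 0 < x -> Phi x = Rpower (x / lambda) k))
  \/ (exists r sigma mu G, 1 < r /\ 0 < sigma /\ is_Gamma (1 + / r) G /\
        (forall x, 0 < x -> exp (- phi x) =
            gen_lognormal_density (2 * Rpower r (/ r) * sigma * G) r sigma mu x) /\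
        (forall x, 1 < x -> Phi x = / (r * Rpower sigma r) * Rpower (ln x) r)).

Section Inverse.

Variables (Phi Phiinv : R -> R) (xbar : R).
Hypothesis xbar_pos : 0 < xbar.
Hypothesis Phi_mono : forall x y, xbar <= x -> x <= y -> Phi x <= Phi y.
Hypothesis Phi_inv : is_inverse_on Phi Phiinv xbar.

(* The case [z < xbar] is free since [Phiinv] takes values in [[xbar, +oo)]. *)
Lemma le_Phiinv z Y :
  Phi xbar <= Y -> (xbar <= z -> Phi z <= Y) -> z <= Phiinv Y.
Proof.
  intros HY HzY; destruct Phi_inv as [Hleft Hright].
  destruct (Hright Y HY) as [HwY HPw].
  destruct (Rlt_le_dec z xbar) as [Hz | Hz]; [lra |].
  destruct (Rle_lt_dec z (Phiinv Y)) as [Hle | Hlt]; [exact Hle |].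
  assert (HPz : Phi z = Y) by (pose proof (Phi_mono _ _ HwY (Rlt_le _ _ Hlt)); specialize (HzY Hz); lra).
  rewrite <- HPz, Hleft in Hlt by exact Hz; lra.
Qed.

Lemma Phiinv_le_compat Y1 Y2 : Phi xbar <= Y1 -> Y1 <= Y2 -> Phiinv Y1 <= Phiinv Y2.
Proof.
  intros H1 H12; destruct (proj2 Phi_inv Y1 H1) as [_ HP1].
  apply le_Phiinv; lra.
Qed.

Lemma Phiinv_pos_at_top : at_top (fun y => 0 < Phiinv y).
Proof.
  exists (Phi xbar); intros y Hy.
  destruct (proj2 Phi_inv y ltac:(lra)); lra.
Qed.

(* The upper half of pseudo-regular variation with [eps = 1] gives some [c > 1] with
   [Phiinv (c y) <= 2 Phiinv y] near infinity; take [rho = 1 / c]. *)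
Lemma Phiinv_contraction_of_pseudo_regular_variation :
  pseudo_regularly_varying Phiinv ->
  exists rho, 0 < rho < 1 /\ at_top (fun y => / 2 * Phiinv y <= Phiinv (rho * y)).
Proof.
  intros [Hprv _]; destruct (Hprv 1 Rlt_0_1) as [d [Hd Hc]].
  set (c := 1 + d / 2).
  destruct (Hc c) as [Xc HXc]; [unfold c; rewrite Rabs_right; lra |].
  destruct Phiinv_pos_at_top as [Y0 HY0].
  exists (/ c); split.
  { split; [apply Rinv_0_lt_compat | rewrite <- Rinv_1; apply Rinv_lt_contravar]; unfold c; lra. }
  exists (c * Rmax Xc Y0); intros y Hy.
  assert (Hc0 : 0 < c) by (unfold c; lra).
  assert (Hyc : Rmax Xc Y0 < / c * y).
  { apply (Rmult_lt_reg_l c); [lra |]; rewrite <- Rmult_assoc, Rinv_r, Rmult_1_l; lra. }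
  pose proof (Rmax_l Xc Y0); pose proof (Rmax_r Xc Y0).
  specialize (HXc (/ c * y) ltac:(lra)); specialize (HY0 (/ c * y) ltac:(lra)).
  rewrite <- Rmult_assoc, Rinv_r, Rmult_1_l in HXc by lra.
  apply (Rmult_le_compat_r (Phiinv (/ c * y))) in HXc; [| lra].
  unfold Rdiv in HXc; rewrite Rmult_assoc, Rinv_l in HXc; lra.
Qed.

(* A Weibull-type [Phi] is homogeneous: [Phi (q w) = Phi w / 2] for [q = 2^(-1/k)]. *)
Lemma Phiinv_contraction_of_power lambda k :
  0 < lambda -> 0 < k ->
  (forall x, 0 < x -> Phi x = Rpower (x / lambda) k) ->
  at_top (fun y => Rpower (/ 2) (/ k) * Phiinv y <= Phiinv (/ 2 * y)).
Proof.
  intros Hl Hk HPhi.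
  exists (2 * Rabs (Phi xbar)); intros y Hy.
  pose proof (Rle_abs (Phi xbar)); pose proof (Rabs_pos (Phi xbar)).
  destruct (proj2 Phi_inv y ltac:(lra)) as [Hw HPw].
  set (q := Rpower (/ 2) (/ k)); set (w := Phiinv y) in *.
  assert (Hq : 0 < q) by apply Rpower_pos.
  apply le_Phiinv; [lra | intros _].
  rewrite HPhi by nra; rewrite HPhi in HPw by lra.
  replace (q * w / lambda) with (q * (w / lambda)) by (field; lra).
  rewrite <- Rpower_mult_distr, HPw by (try apply Rdiv_lt_0_compat; lra).
  unfold q; rewrite Rpower_mult, Rinv_l, Rpower_1 by lra; lra.
Qed.

(* For [Phi = C ln^r], [Phi (w^p) = p^r Phi w]: the exponent [p] enters as a power of [Phiinv]. *)
Lemma Phiinv_contraction_of_log_power C r p :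
  0 < C -> 0 < r -> 0 < p ->
  (forall x, 1 < x -> Phi x = C * Rpower (ln x) r) ->
  at_top (fun y => Rpower (Phiinv y) p <= Phiinv (Rpower p r * y)).
Proof.
  intros HC Hr Hp HPhi.
  set (x0 := Rmax 2 xbar); set (rho := Rpower p r).
  assert (Hrho : 0 < rho) by apply Rpower_pos.
  exists (Rmax (Phi x0) (Phi xbar / rho)); intros y Hy.
  pose proof (Rmax_l (Phi x0) (Phi xbar / rho)); pose proof (Rmax_r (Phi x0) (Phi xbar / rho)).
  assert (Hx0 : 2 <= x0 /\ xbar <= x0) by (split; [apply Rmax_l | apply Rmax_r]).
  assert (Hrhoy : Phi xbar <= rho * y).
  { assert (Hy' : Phi xbar / rho < y) by lra.
    apply (Rmult_lt_compat_l rho) in Hy'; [| lra].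
    unfold Rdiv in Hy'; rewrite (Rmult_comm (Phi xbar)), <- Rmult_assoc, Rinv_r in Hy'; lra. }
  assert (HPx0 : Phi xbar <= Phi x0) by (apply Phi_mono; lra).
  destruct (proj2 Phi_inv y ltac:(lra)) as [_ HPw].
  assert (Hw : x0 <= Phiinv y) by (apply le_Phiinv; intros; lra).
  set (w := Phiinv y) in *.
  assert (Hlnw : 0 < ln w) by (rewrite <- ln_1; apply ln_increasing; lra).
  apply le_Phiinv; [lra | intros _].
  assert (Hz : 1 < Rpower w p).
  { unfold Rpower; rewrite <- exp_0; apply exp_increasing; nra. }
  rewrite HPhi, ln_Rpower by lra; rewrite HPhi in HPw by lra.
  rewrite <- Rpower_mult_distr, <- HPw by lra; unfold rho; lra.
Qed.

Lemma Phiinv_contraction_of_cases phi s :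
  0 < s < 1 -> Phi_cases phi Phi Phiinv ->
  exists rho q p, 0 < rho < 1 /\ 0 < q /\ s <= p /\
    at_top (fun y => q * Rpower (Phiinv y) p <= Phiinv (rho * y)).
Proof.
  intros Hs Hcases.
  assert (Hlinear : forall rho q, at_top (fun y => q * Phiinv y <= Phiinv (rho * y)) ->
            at_top (fun y => q * Rpower (Phiinv y) 1 <= Phiinv (rho * y))).
  { intros rho q H; generalize (filter_and _ _ H Phiinv_pos_at_top); apply filter_imp.
    intros y [Hy Hpos]; rewrite Rpower_1 by exact Hpos; exact Hy. }
  destruct Hcases
    as [Hprv | [(lambda & k & Hl & Hk & _ & HPhi) | (r & sigma & _ & _ & Hr & Hsigma & _ & _ & HPhi)]].
  - destruct (Phiinv_contraction_of_pseudo_regular_variation Hprv) as [rho [Hrho H]].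
    exists rho, (/ 2), 1; repeat split; try lra; now apply Hlinear.
  - exists (/ 2), (Rpower (/ 2) (/ k)), 1; repeat split; try lra; [apply Rpower_pos |].
    apply Hlinear, (Phiinv_contraction_of_power lambda); lra || assumption.
  - (* any [p] in [(s, 1)] works, and then [rho = p^r < 1] *)
    set (p := (1 + s) / 2).
    exists (Rpower p r), 1, p; repeat split; try (unfold p; lra); [apply Rpower_pos | |].
    + replace 1 with (Rpower 1 r) by (unfold Rpower; rewrite ln_1, Rmult_0_r; apply exp_0).
      apply Rlt_Rpower_l; unfold p; lra.
    + generalize (Phiinv_contraction_of_log_power (/ (r * Rpower sigma r)) r p
        ltac:(apply Rinv_0_lt_compat, Rmult_lt_0_compat; [lra | apply Rpower_pos])
        ltac:(lra) ltac:(unfold p; lra) HPhi).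
      apply filter_imp; intros y Hy; lra.
Qed.

Lemma Phiinv_log_ratio_growth phi L rho q p s alpha :
  0 < rho < 1 -> 0 < q -> 0 <= s <= p -> 0 < alpha ->
  filterlim phi at_top at_top ->
  at_top (fun y => q * Rpower (Phiinv y) p <= Phiinv (rho * y)) ->
  at_top (fun x => alpha <= Phiinv (phi x) / x) ->
  at_top (fun x => rho * phi x <= L x) ->
  at_top (fun x => q * Rpower alpha p * Rpower x s <= Phiinv (L x)).
Proof.
  intros Hrho Hq Hsp Halpha Hphi Hcontr Hgrowth HL.
  generalize (filter_and _ _ (at_top_comp Hphi Hcontr) (filter_and _ _ Hgrowth (filter_and _ _ HL
    (filter_and _ _ (at_top_comp Hphi (at_top_gt (Phi xbar / rho))) (at_top_gt 1))))); apply filter_imp.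
  intros x [Hc [Ha [HLx [Hbig Hx]]]].
  assert (Hrhophi : Phi xbar <= rho * phi x).
  { apply (Rmult_lt_compat_l rho) in Hbig; [| lra].
    unfold Rdiv in Hbig; rewrite (Rmult_comm (Phi xbar)), <- Rmult_assoc, Rinv_r in Hbig; lra. }
  assert (Hax : alpha * x <= Phiinv (phi x)).
  { apply (Rmult_le_compat_r x) in Ha; [| lra].
    unfold Rdiv in Ha; rewrite Rmult_assoc, Rinv_l in Ha; lra. }
  assert (Hxs : Rpower x s <= Rpower x p) by (apply Rle_Rpower; lra).
  assert (Hpow : Rpower alpha p * Rpower x p <= Rpower (Phiinv (phi x)) p).
  { rewrite Rpower_mult_distr by lra; apply Rle_Rpower_l; nra. }
  pose proof (Rpower_pos alpha p).
  pose proof (Phiinv_le_compat _ _ Hrhophi HLx).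
  assert (q * Rpower alpha p * Rpower x s <= q * Rpower (Phiinv (phi x)) p).
  { rewrite Rmult_assoc; apply Rmult_le_compat_l; [lra |].
    apply Rle_trans with (Rpower alpha p * Rpower x p); [apply Rmult_le_compat_l |]; lra. }
  lra.
Qed.

End Inverse.

Lemma right_deriv_nonneg (h : R -> R) x l :
  (forall e, 0 < e -> h x <= h (x + e)) -> right_deriv h x l -> 0 <= l.
Proof.
  intros Hmono Hd; destruct (Rle_lt_dec 0 l) as [Hl | Hl]; [exact Hl |].
  destruct (Hd (- l) ltac:(lra)) as [delta [Hdelta Hq]].
  specialize (Hq (delta / 2) ltac:(lra)); apply Rabs_def2 in Hq.
  assert (0 <= (h (x + delta / 2) - h x) / (delta / 2)).
  { apply Rdiv_le_0_compat; [specialize (Hmono (delta / 2)) |]; lra. }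
  lra.
Qed.

Lemma coef_a_pos (Phi Phiinv : R -> R) xbar theta dinv :
  0 < xbar -> 0 < Phi xbar -> 0 < theta -> is_inverse_on Phi Phiinv xbar ->
  right_deriv Phiinv (ln (ybar Phi xbar)) dinv ->
  0 < coef_a Phi Phiinv xbar theta dinv.
Proof.
  intros Hxbar HPhi Htheta [Hleft Hright] Hd.
  unfold coef_a, ybar in *; rewrite ln_exp in *.
  assert (Hdinv : 0 <= dinv).
  { apply (right_deriv_nonneg Phiinv (Phi xbar)); [| exact Hd].
    intros e He; rewrite Hleft by lra; apply Hright; lra. }
  rewrite Hleft by lra.
  apply Rdiv_lt_0_compat; [lra |].
  pose proof (Rpower_pos xbar theta); pose proof (Rpower_pos xbar (theta - 1)).
  assert (0 <= theta * Rpower xbar (theta - 1) * dinv) by (apply Rmult_le_pos; [nra | lra]).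
  lra.
Qed.

Lemma F_Phi_above (Phi Phiinv : R -> R) xbar theta dinv y :
  ybar Phi xbar < y ->
  F_Phi Phi Phiinv xbar theta dinv y
  = coef_a Phi Phiinv xbar theta dinv * y * Rpower (Phiinv (ln y)) theta
    + coef_b Phi Phiinv xbar theta dinv.
Proof.
  intros Hy; unfold F_Phi; destruct (Rle_dec y (ybar Phi xbar)); [lra | reflexivity].
Qed.

Lemma F_Phi_ratio_mul_ge (Phi Phiinv : R -> R) xbar theta dinv c t s kappa x gx f :
  0 < coef_a Phi Phiinv xbar theta dinv -> 0 < c -> 0 < kappa -> 0 < theta -> theta * s = t ->
  1 < x -> 0 < f -> c <= Rpower x (t + 1) * gx -> Phi xbar < ln (gx / f) ->
  kappa * Rpower x s <= Phiinv (ln (gx / f)) ->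
  coef_a Phi Phiinv xbar theta dinv * c * Rpower kappa theta / x
    - Rabs (coef_b Phi Phiinv xbar theta dinv) * f
  <= F_Phi Phi Phiinv xbar theta dinv (gx / f) * f.
Proof.
  intros Ha Hc Hk Htheta Hst Hx Hf Hgx Hy HP.
  set (a := coef_a Phi Phiinv xbar theta dinv) in *.
  set (b := coef_b Phi Phiinv xbar theta dinv).
  set (P := Phiinv (ln (gx / f))) in *.
  assert (Hxt : Rpower x (t + 1) = Rpower x t * x) by (rewrite Rpower_plus, Rpower_1; lra).
  pose proof (Rpower_pos x t); pose proof (Rpower_pos x s); pose proof (Rpower_pos kappa theta).
  assert (Hxtx : 0 < Rpower x t * x) by nra.
  rewrite Hxt in Hgx.
  assert (Hgc : c / (Rpower x t * x) <= gx).
  { apply (Rmult_le_reg_l (Rpower x t * x)); [exact Hxtx |]; field_simplify; lra. }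
  assert (Hgpos : 0 < gx) by (pose proof (Rdiv_lt_0_compat c _ Hc Hxtx); lra).
  assert (Hybar : ybar Phi xbar < gx / f).
  { unfold ybar; rewrite <- (exp_ln (gx / f)) by (apply Rdiv_lt_0_compat; lra).
    apply exp_increasing; exact Hy. }
  rewrite F_Phi_above by exact Hybar; fold a b P.
  replace ((a * (gx / f) * Rpower P theta + b) * f) with (a * gx * Rpower P theta + b * f)
    by (field; lra).
  assert (HPt : Rpower kappa theta * Rpower x t <= Rpower P theta).
  { rewrite <- Hst, (Rmult_comm theta s), <- Rpower_mult, Rpower_mult_distr by (try apply Rpower_pos; lra).
    apply Rle_Rpower_l; [lra | split; [nra | exact HP]]. }
  assert (Hmain : a * c * Rpower kappa theta / x <= a * gx * Rpower P theta).
  { replace (a * c * Rpower kappa theta / x)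
      with (a * (c / (Rpower x t * x)) * (Rpower kappa theta * Rpower x t)) by (field; lra).
    apply Rmult_le_compat; [| | apply Rmult_le_compat_l | exact HPt]; try lra.
    - apply Rmult_le_pos; [lra |]; apply Rlt_le, Rdiv_lt_0_compat; lra.
    - apply Rmult_le_pos; lra. }
  pose proof (Rle_abs (- b)); rewrite Rabs_Ropp in *.
  assert (- (Rabs b * f) <= b * f) by nra.
  lra.
Qed.

Lemma F_Phi_integrand_ge_inv (Phi Phiinv phi g : R -> R) xbar theta dinv c t s kappa :
  0 < coef_a Phi Phiinv xbar theta dinv -> 0 < c -> 0 < kappa -> 0 < theta -> theta * s = t ->
  at_top (fun x => c <= Rpower x (t + 1) * g x) ->
  at_top (fun x => kappa * Rpower x s <= Phiinv (ln (g x / exp (- phi x)))) ->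
  at_top (fun x => Phi xbar < ln (g x / exp (- phi x))) ->
  at_top (fun x => 2 * ln x < phi x) ->
  exists K, 0 < K /\ at_top (fun x =>
    K / x <= F_Phi Phi Phiinv xbar theta dinv (g x / exp (- phi x)) * exp (- phi x)).
Proof.
  intros Ha Hc Hk Htheta Hst Hg Hgrowth Habove Hphi.
  set (b := coef_b Phi Phiinv xbar theta dinv).
  set (K0 := coef_a Phi Phiinv xbar theta dinv * c * Rpower kappa theta).
  assert (HK0 : 0 < K0) by (apply Rmult_lt_0_compat; [apply Rmult_lt_0_compat | apply Rpower_pos]; lra).
  exists (K0 / 2); split; [lra |].
  generalize (filter_and _ _ Hg (filter_and _ _ Hgrowth (filter_and _ _ Habove
    (filter_and _ _ Hphi (filter_and _ _ (at_top_gt 1) (at_top_gt (2 * Rabs b / K0))))))).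
  apply filter_imp; intros x [Hgx [HP [Hy [Hphix [Hx Hxb]]]]].
  pose proof (F_Phi_ratio_mul_ge Phi Phiinv xbar theta dinv c t s kappa x (g x) (exp (- phi x))
    Ha Hc Hk Htheta Hst Hx (exp_pos _) Hgx Hy HP) as Hratio; fold b K0 in Hratio.
  (* [phi x > 2 ln x] gives [f x <= x^-2], so the [b] term is [O(x^-2)]. *)
  assert (Hf : exp (- phi x) <= / (x * x)).
  { rewrite <- (exp_ln x) at 2 3 by lra.
    rewrite <- exp_plus, <- exp_Ropp; left; apply exp_increasing; lra. }
  assert (Hb : Rabs b * / (x * x) <= K0 / 2 / x).
  { apply (Rmult_le_reg_r (x * x)); [nra |].
    replace (K0 / 2 / x * (x * x)) with (K0 * x / 2) by (field; lra).
    rewrite Rmult_assoc, Rinv_l by nra.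
    apply (Rmult_lt_compat_l K0) in Hxb; [| exact HK0].
    unfold Rdiv in Hxb; rewrite (Rmult_comm (2 * Rabs b)), <- Rmult_assoc, Rinv_r in Hxb; lra. }
  pose proof (Rabs_pos b).
  assert (Rabs b * exp (- phi x) <= Rabs b * / (x * x)) by (apply Rmult_le_compat_l; lra).
  assert (K0 / x = 2 * (K0 / 2 / x)) by (field; lra).
  lra.
Qed.

Lemma Phiinv_log_ratio_ge_power (phi Phi Phiinv g : R -> R) xbar c t s :
  class_ii phi Phi Phiinv xbar -> Phi_cases phi Phi Phiinv -> 0 < s < 1 -> 0 < c ->
  at_top (fun x => c <= Rpower x (t + 1) * g x) ->
  exists kappa, 0 < kappa /\
    at_top (fun x => kappa * Rpower x s <= Phiinv (ln (g x / exp (- phi x)))).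
Proof.
  intros (_ & Hphi_ln & Hxbar & _ & HPhi_mono & _ & _ & Hinv & (alpha & Xa & Halpha & Hgrowth) & _)
    Hcases Hs Hc Hg.
  destruct (Phiinv_contraction_of_cases Phi Phiinv xbar Hxbar HPhi_mono Hinv phi s Hs Hcases)
    as (rho & q & p & Hrho & Hq & Hsp & Hcontr).
  exists (q * Rpower alpha p); split; [apply Rmult_lt_0_compat; [exact Hq | apply Rpower_pos] |].
  apply (Phiinv_log_ratio_growth Phi Phiinv xbar HPhi_mono Hinv phi _ rho q p s alpha); try lra.
  - exact (phi_tends_to_infinity phi Hphi_ln).
  - exact Hcontr.
  - now exists Xa.
  - exact (log_ratio_ge phi Hphi_ln g t c rho Hc Hrho Hg).
Qed.

Theorem proposition4p5
  (phi Phi Phiinv : R -> R) (xbar dinv theta t : R) (g : R -> R)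
  (Hclass : class_ii phi Phi Phiinv xbar)
  (Hdinv : right_deriv Phiinv (ln (ybar Phi xbar)) dinv)
  (Hcases :
     pseudo_regularly_varying Phiinv
     \/ (exists lambda k, 0 < lambda /\ 0 < k < 1 /\
           (forall x, 0 < x -> exp (- phi x) = weibull_density lambda k x) /\
           (forall x, 0 < x -> Phi x = Rpower (x / lambda) k))
     \/ (exists r sigma mu G, 1 < r /\ 0 < sigma /\ is_Gamma (1 + / r) G /\
           (forall x, 0 < x -> exp (- phi x) =
               gen_lognormal_density (2 * Rpower r (/ r) * sigma * G) r sigma mu x) /\
           (forall x, 1 < x -> Phi x = / (r * Rpower sigma r) * Rpower (ln x) r)))
  (Htheta : 1 < theta)
  (Hg_nonneg : forall x, 0 < x -> 0 <= g x)
  (Ht : 1 < t < theta)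
  (Hliminf : exists c X, 0 < c /\ forall x, X < x -> c <= Rpower x (t + 1) * g x) :
  divergence_infinite (F_Phi Phi Phiinv xbar theta dinv) (fun x => exp (- phi x)) g.
Proof.
  destruct Hliminf as (c & X & Hc & Hg); assert (Hg' : at_top (fun x => c <= Rpower x (t + 1) * g x))
    by now exists X.
  set (s := t / theta).
  assert (Hs : 0 < s < 1).
  { unfold s; split; [apply Rdiv_lt_0_compat; lra |].
    apply (Rmult_lt_reg_r theta); [lra |]; unfold Rdiv; rewrite Rmult_assoc, Rinv_l; lra. }
  destruct (Phiinv_log_ratio_ge_power phi Phi Phiinv g xbar c t s Hclass Hcases Hs Hc Hg')
    as (kappa & Hkappa & Hgrowth).
  destruct Hclass as (_ & Hphi_ln & Hxbar & HPhi_pos & _ & _ & _ & Hinv & _).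
  assert (Ha : 0 < coef_a Phi Phiinv xbar theta dinv)
    by (apply coef_a_pos; [exact Hxbar | apply HPhi_pos; lra | lra | exact Hinv | exact Hdinv]).
  assert (Habove : at_top (fun x => Phi xbar < ln (g x / exp (- phi x)))).
  { assert (Hhalf : 0 < / 2 < 1) by lra.
    generalize (filter_and _ _ (log_ratio_ge phi Hphi_ln g t c _ Hc Hhalf Hg')
      (at_top_comp (phi_tends_to_infinity phi Hphi_ln) (at_top_gt (2 * Phi xbar)))).
    apply filter_imp; intros x [H1 H2]; lra. }
  assert (Hphi2 : at_top (fun x => 2 * ln x < phi x)) by exact (phi_gt_mul_ln phi Hphi_ln 2).
  destruct (F_Phi_integrand_ge_inv Phi Phiinv phi g xbar theta dinv c t s kappa Ha Hc Hkappa
    ltac:(lra) ltac:(unfold s; field; lra) Hg' Hgrowth Habove Hphi2) as (K & HK & Hbound).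
  exact (integral_diverges_of_ge_inv K _ HK Hbound).
Qed.
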